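(* Let $d\ge2$ and let $\mathbf{p}^\star=(1,p_2^\star,\dots,p_d^\star)$ be a maximizer of the problem $$\max\Big\{\frac{\prod_{i=1}^dp_i}{D_1(\mathbf{p})^d}\;:\;\mathbf{p}\in(0,\infty)^d,\ p_1=1,\ D_1(\mathbf{p})^2\ge D_j(\mathbf{p})^2\text{ for all }j\in\{2,\dots,d\}\Big\}.$$ Then there exists a unique $k\in\{2,\dots,d\}$ such that $D_k(\mathbf{p}^\star)=D_1(\mathbf{p}^\star)=D(\mathbf{p}^\star)$, and, writing $D_k=D_k(\mathbf{p}^\star)$, $$p_j^\star=\begin{cases}\dfrac{\sqrt2\,D_k}{(j-1)\sqrt{dk}}\sqrt{\dfrac{2k-1}{k-1}}, & j\in\{2,\dots,k-1\},\\[2mm] \dfrac{D_k}{\sqrt{dk}}, & j=k,\\[2mm] \dfrac{D_k}{(j-1)\sqrt d}, & j\in\{k+1,\dots,d\}.\end{cases}$$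
   Context: For $k\in\{1,\dots,d\}$ let $w_{k,i}=0$ for $i<k$, $w_{k,k}=k$, $w_{k,i}=i-1$ for $k<i\le d$, $D_k(\mathbf{p})=\sqrt{\sum_{i=1}^dw_{k,i}^2p_i^2}$, and $D(\mathbf{p})=\max_{k\in\{1,\dots,d\}}D_k(\mathbf{p})$. *)

(* R : realType, vectors p : nat -> R indexed 1..d *)
From mathcomp Require Import all_boot all_order all_algebra.
From mathcomp Require Import reals.
Set Implicit Arguments. Unset Strict Implicit. Unset Printing Implicit Defensive.
Import Order.TTheory GRing.Theory Num.Theory.
Local Open Scope ring_scope.

Definition w (R : realType) (k i : nat) : R :=
  if (i < k)%N then 0 else if i == k then k%:R else (i.-1)%:R.

Definition Dk (R : realType) (d k : nat) (p : nat -> R) : R :=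
  Num.sqrt (\sum_(1 <= i < d.+1) (w R k i) ^+ 2 * (p i) ^+ 2).

(* D(p) = max_{k in 1..d} D_k(p)  (all D_k >= 0, so 0 is a neutral start) *)
Definition Dmax (R : realType) (d : nat) (p : nat -> R) : R :=
  \big[Num.max/0]_(1 <= k < d.+1) Dk d k p.

Definition objective (R : realType) (d : nat) (p : nat -> R) : R :=
  (\prod_(1 <= i < d.+1) p i) / (Dk d 1 p) ^+ d.

Definition feasible (R : realType) (d : nat) (p : nat -> R) : Prop :=
  (forall i, (1 <= i <= d)%N -> 0 < p i) /\ p 1%N = 1 /\
  (forall j, (2 <= j <= d)%N -> (Dk d j p) ^+ 2 <= (Dk d 1 p) ^+ 2).

Definition is_maximizer (R : realType) (d : nat) (p : nat -> R) : Prop :=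
  feasible d p /\ forall q : nat -> R, feasible d q -> objective d q <= objective d p.

From mathcomp Require Import all_boot all_order all_algebra.
From mathcomp Require Import reals.
From mathcomp Require Import ring lra zify.
Import Order.TTheory GRing.Theory Num.Theory.
Local Open Scope ring_scope.
Set Implicit Arguments. Unset Strict Implicit. Unset Printing Implicit Defensive.

(* Put [a = p_2^2] and [x_i = ((i-1) p_i)^2] for [i >= 3].  Then
   [D_1^2 = 1 + a + \sum x_i] and [D_2^2 = 4a + \sum x_i], so the constraint
   [D_2 <= D_1] reads [3a <= 1], while the squared objective is, up to a constant
   factor, [a \prod x_i / (D_1^2/d)^d].  AM-GM for the [d] numbers
   [(1+a)/2, (1+a)/2, x_3, ..., x_d], whose sum is [D_1^2], bounds this by
   [a / ((1+a)/2)^2 <= 3/4], with equality iff [a = 1/3] and every [x_i = 2/3].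
   The bound is attained, so every maximizer has exactly this profile; for it
   [D_1 = D_2 > D_k] for [k >= 3], hence [k = 2], and the formulas are a direct
   computation. *)

Section Maximizer.
Variable R : realType.
Implicit Types q : nat -> R.

Definition wtail (d k : nat) q : R := \sum_(k.+1 <= i < d.+1) ((i.-1)%:R * q i) ^+ 2.

Lemma Dk_sq d k q : Dk d k q ^+ 2 = \sum_(1 <= i < d.+1) w R k i ^+ 2 * q i ^+ 2.
Proof. by rewrite sqr_sqrtr // sumr_ge0 // => i _; rewrite mulr_ge0 ?sqr_ge0. Qed.

Lemma Dk_sq_head_wtail d k q : (1 <= k <= d)%N ->
  Dk d k q ^+ 2 = (k%:R * q k) ^+ 2 + wtail d k q.
Proof.
move=> /andP[k1 kd]; rewrite Dk_sq (@big_cat_nat _ _ _ k) ?(leq_trans kd) //=.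
rewrite big_nat big1 ?add0r => [|i /andP[_ ik]]; last by rewrite /w ik expr0n mul0r.
rewrite big_ltn ?ltnS // /w ltnn eqxx exprMn; congr (_ + _).
apply: eq_big_nat => i /andP[ki _].
by rewrite ltnNge (ltnW ki) /= gtn_eqF // exprMn.
Qed.

Lemma wtailS d k q : (k < d)%N ->
  wtail d k q = (k%:R * q k.+1) ^+ 2 + wtail d k.+1 q.
Proof. by move=> kd; rewrite /wtail big_ltn. Qed.

Lemma Dk1_sq d q : (2 <= d)%N -> q 1%N = 1 ->
  Dk d 1 q ^+ 2 = 1 + q 2%N ^+ 2 + wtail d 2 q.
Proof.
move=> d2 q1; rewrite Dk_sq_head_wtail ?(leq_trans _ d2) // wtailS // q1.
by rewrite !mul1r expr1n addrA.
Qed.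

Lemma Dk2_sq d q : (2 <= d)%N -> Dk d 2 q ^+ 2 = 4 * q 2%N ^+ 2 + wtail d 2 q.
Proof. by move=> d2; rewrite Dk_sq_head_wtail ?d2 // exprMn -natrX. Qed.

Lemma Dk1_sq_ge1 d q : (1 <= d)%N -> q 1%N = 1 -> 1 <= Dk d 1 q ^+ 2.
Proof.
move=> d1 q1; rewrite Dk_sq_head_wtail ?d1 // q1 mul1r expr1n lerDl.
by rewrite sumr_ge0 // => i _; rewrite sqr_ge0.
Qed.

Lemma feasible_q2_sq_le d q : (2 <= d)%N -> feasible d q -> 3 * q 2%N ^+ 2 <= 1.
Proof.
move=> d2 [_ [q1 hD]]; have := hD 2%N d2.
by rewrite Dk2_sq // Dk1_sq //; lra.
Qed.

Definition extremal (d : nat) q : Prop :=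
  [/\ q 1%N = 1, q 2%N ^+ 2 = 1 / 3 &
      forall i, (3 <= i <= d)%N -> ((i.-1)%:R * q i) ^+ 2 = 2 / 3].

Section Extremal.
Variables (d : nat) (q : nat -> R).
Hypotheses (d2 : (2 <= d)%N) (ext : extremal d q).

Lemma extremal_wtail k : (2 <= k <= d)%N -> wtail d k q = (d - k)%:R * (2 / 3).
Proof.
case: ext => _ _ xi /andP[k2 kd].
rewrite /wtail (eq_big_nat _ _ (F2 := fun=> 2 / 3)) => [|i /andP[ki id]].
  by rewrite sumr_const_nat subSS [RHS]mulr_natl.
by rewrite xi // (leq_ltn_trans k2 ki) -ltnS.
Qed.

Lemma extremal_Dk1_sq : Dk d 1 q ^+ 2 = d%:R * (2 / 3).
Proof.
case: (ext) => q1 q2 _; rewrite Dk1_sq // q2 extremal_wtail ?d2 // natrB //; lra.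
Qed.

Lemma extremal_Dk2_sq : Dk d 2 q ^+ 2 = d%:R * (2 / 3).
Proof.
case: (ext) => _ q2 _; rewrite Dk2_sq // q2 extremal_wtail ?d2 // natrB //; lra.
Qed.

Lemma extremal_Dk2 : Dk d 2 q = Dk d 1 q.
Proof.
by apply/eqP; rewrite -(eqrXn2 (n := 2)) ?sqrtr_ge0 // extremal_Dk1_sq extremal_Dk2_sq.
Qed.

Lemma extremal_Dk_sq_lt k : (3 <= k <= d)%N -> Dk d k q ^+ 2 < Dk d 1 q ^+ 2.
Proof.
case: (ext) => _ _ xi /andP[k3 kd].
have xk : (k.-1%:R * q k) ^+ 2 = 2 / 3 by rewrite xi ?k3.
(* [(k q_k)^2 = (k / (k - 1))^2 * 2/3 < k * 2/3] because [k < (k - 1)^2]. *)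
have head_lt : (k%:R * q k) ^+ 2 < k%:R * (2 / 3).
  have t0 : 0 < q k ^+ 2.
    rewrite lt0r sqr_ge0 andbT; apply/eqP => t0.
    by move: xk; rewrite exprMn t0 mulr0; lra.
  rewrite -xk !exprMn [X in _ < X]mulrA ltr_pM2r // -!natrX -natrM ltr_nat.
  by case: k k3 {kd xi xk t0} => [|[|[|m]]] //= _; rewrite !expnS expn0 !muln1; nia.
rewrite Dk_sq_head_wtail ?(leq_trans _ k3) // extremal_wtail ?(leq_trans _ k3) //.
by rewrite extremal_Dk1_sq natrB //; lra.
Qed.

Lemma extremal_Dmax : Dk d 1 q = Dmax d q.
Proof.
rewrite /Dmax (big_ltn (leqW d2)) max_l // big_nat_cond; apply: bigmax_le => [|k].
  exact: sqrtr_ge0.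
rewrite andbT => /andP[k2 kd]; rewrite -(ler_pXn2r (n := 2)) ?nnegrE ?sqrtr_ge0 //.
case: (ltngtP k 2) k2 => [//|k3 _|-> _]; last by rewrite extremal_Dk2.
by apply/ltW/extremal_Dk_sq_lt; rewrite k3 -ltnS.
Qed.

Lemma extremal_q2 : 0 < q 2%N -> q 2%N = Dk d 2 q / Num.sqrt (d%:R * 2%:R).
Proof.
move=> q2_gt0; have [_ q2 _] := ext; have d0 : 0 < d%:R :> R by rewrite ltr0n ltnW.
apply/eqP; rewrite -(eqrXn2 (n := 2)) ?(ltW q2_gt0) ?divr_ge0 ?sqrtr_ge0 //.
rewrite expr_div_n [Num.sqrt (_ * _) ^+ 2]sqr_sqrtr ?mulr_ge0 ?(ltW d0) //.
rewrite extremal_Dk2_sq q2.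
by apply/eqP; field; rewrite gt_eqF.
Qed.

Lemma extremal_qj j : (3 <= j <= d)%N -> 0 < q j ->
  q j = Dk d 2 q / (j.-1%:R * Num.sqrt d%:R).
Proof.
move=> /andP[j3 jd] qj_gt0; have [_ _ xi] := ext; have d0 : 0 < d%:R :> R by rewrite ltr0n ltnW.
have j0 : j.-1%:R != 0 :> R by rewrite pnatr_eq0 -lt0n; case: j j3 {jd qj_gt0} => [|[|]].
have xj : q j ^+ 2 = 2 / 3 / j.-1%:R ^+ 2.
  by rewrite -(xi j) ?j3 // exprMn [_ * q j ^+ 2]mulrC mulfK // expf_neq0.
apply/eqP; rewrite -(eqrXn2 (n := 2)) ?(ltW qj_gt0) ?divr_ge0 ?mulr_ge0 ?sqrtr_ge0 //.
rewrite expr_div_n exprMn [Num.sqrt d%:R ^+ 2]sqr_sqrtr ?(ltW d0) // extremal_Dk2_sq xj.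
by apply/eqP; field; rewrite j0 gt_eqF.
Qed.

End Extremal.

Definition tail_sqprod (d : nat) q : R := \prod_(3 <= i < d.+1) ((i.-1)%:R * q i) ^+ 2.

Definition score (d : nat) q : R :=
  q 2%N ^+ 2 * tail_sqprod d q / (Dk d 1 q ^+ 2 / d%:R) ^+ d.

Lemma Dk1_normalized_gt0 d q : (1 <= d)%N -> q 1%N = 1 -> 0 < (Dk d 1 q ^+ 2 / d%:R) ^+ d.
Proof.
move=> d1 q1; apply/exprn_gt0/divr_gt0; last by rewrite ltr0n.
by apply: lt_le_trans (Dk1_sq_ge1 d1 q1).
Qed.

Lemma objective_sq_scaled d q : (2 <= d)%N -> q 1%N = 1 ->
  objective d q ^+ 2 * ((\prod_(3 <= i < d.+1) i.-1%:R) ^+ 2 * d%:R ^+ d) = score d q.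
Proof.
move=> d2 q1; have d1 : (1 < d.+1)%N := leqW d2; have d2' : (2 < d.+1)%N := d2.
have D0 : Dk d 1 q != 0.
  by apply: contraTneq (Dk1_sq_ge1 (ltnW d2) q1) => ->; rewrite expr0n /= ler10.
have N0 : d%:R != 0 :> R by rewrite pnatr_eq0 -lt0n ltnW.
set K := \prod_(3 <= i < d.+1) i.-1%:R; set Q := \prod_(3 <= i < d.+1) q i.
have tailE : tail_sqprod d q = (K * Q) ^+ 2 by rewrite /tail_sqprod prodrXl big_split.
have powE : Dk d 1 q ^+ 2 ^+ d = (Dk d 1 q ^+ d) ^+ 2 by rewrite -!exprM mulnC.
rewrite /score tailE /objective (big_ltn d1) (big_ltn d2') q1 mul1r -/Q.
rewrite [(_ / d%:R) ^+ d]expr_div_n powE.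
by field; rewrite !expf_neq0.
Qed.

Lemma leif_AGM_nat (n : nat) (e : nat -> R) :
  (forall i, (1 <= i <= n)%N -> 0 <= e i) ->
  \prod_(1 <= i < n.+1) e i <= ((\sum_(1 <= i < n.+1) e i) / n%:R) ^+ n
   ?= iff [forall i : 'I_n, forall j : 'I_n, e i.+1 == e j.+1].
Proof.
move=> e0; have := @leif_AGM R _ predT (fun i : 'I_n => e i.+1).
rewrite cardT size_enum_ord !big_add1 /= !big_mkord; apply=> i _.
by apply: e0; rewrite ltn_ord.
Qed.

Definition agm_terms q (i : nat) : R :=
  if (i <= 2)%N then (1 + q 2%N ^+ 2) / 2 else ((i.-1)%:R * q i) ^+ 2.

Lemma agm_terms_tail q i : (3 <= i)%N -> agm_terms q i = ((i.-1)%:R * q i) ^+ 2.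
Proof. by move=> i3; rewrite /agm_terms leqNgt i3. Qed.

Lemma score_AGM d q : (2 <= d)%N -> q 1%N = 1 ->
  ((1 + q 2%N ^+ 2) / 2) ^+ 2 * tail_sqprod d q <= (Dk d 1 q ^+ 2 / d%:R) ^+ d
   ?= iff [forall i : 'I_d, forall j : 'I_d, agm_terms q i.+1 == agm_terms q j.+1].
Proof.
move=> d2 q1; have d1 : (1 < d.+1)%N := leqW d2; have d2' : (2 < d.+1)%N := d2.
have terms_ge0 i : (1 <= i <= d)%N -> 0 <= agm_terms q i.
  rewrite /agm_terms => _; case: ifP => _; last exact: sqr_ge0.
  by rewrite divr_ge0 // addr_ge0 // sqr_ge0.
have prodE : \prod_(1 <= i < d.+1) agm_terms q i =
    ((1 + q 2%N ^+ 2) / 2) ^+ 2 * tail_sqprod d q.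
  rewrite (big_ltn d1) (big_ltn d2') mulrA -expr2; congr (_ * _).
  by apply: eq_big_nat => i /andP[i3 _]; rewrite agm_terms_tail.
have sumE : \sum_(1 <= i < d.+1) agm_terms q i = Dk d 1 q ^+ 2.
  rewrite Dk1_sq // (big_ltn d1) (big_ltn d2') /wtail.
  rewrite (eq_big_nat _ _ (F2 := fun i => ((i.-1)%:R * q i) ^+ 2)) => [|i /andP[i3 _]].
    by rewrite /agm_terms /=; lra.
  exact: agm_terms_tail.
by rewrite -prodE -sumE; apply: leif_AGM_nat.
Qed.

Lemma score_le d q : (2 <= d)%N -> feasible d q -> score d q <= 3 / 4.
Proof.
move=> d2 hf; have [_ [q1 _]] := hf; have a3 := feasible_q2_sq_le d2 hf.
have P0 : 0 <= tail_sqprod d q by rewrite prodr_ge0 // => i _; rewrite sqr_ge0.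
rewrite /score ler_pdivrMr ?Dk1_normalized_gt0 ?(ltnW d2) //.
have a_le : q 2%N ^+ 2 <= 3 / 4 * ((1 + q 2%N ^+ 2) / 2) ^+ 2.
  by have := sqr_ge0 (q 2%N); nra.
apply: le_trans (ler_wpM2r P0 a_le) _.
by rewrite -[leLHS]mulrA; apply: ler_wpM2l; [lra | exact: (score_AGM d2 q1).1].
Qed.

Lemma tail_sqprod_gt0 d q : (forall i, (1 <= i <= d)%N -> 0 < q i) -> 0 < tail_sqprod d q.
Proof.
move=> qpos; rewrite /tail_sqprod big_nat_cond prodr_gt0 // => i /andP[/andP[i3 id] _].
by rewrite exprn_gt0 // mulr_gt0 ?qpos ?ltr0n //; lia.
Qed.

Lemma score_ge_extremal d q : (2 <= d)%N -> feasible d q -> 3 / 4 <= score d q ->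
  extremal d q.
Proof.
move=> d2 hf; have [qpos [q1 _]] := hf; have a3 := feasible_q2_sq_le d2 hf.
have P0 := tail_sqprod_gt0 qpos.
rewrite /score ler_pdivlMr ?Dk1_normalized_gt0 ?(ltnW d2) // => score_ge.
have [agm agm_eq] := score_AGM d2 q1.
set a := q 2%N ^+ 2 in a3 score_ge agm agm_eq *.
set G := (_ ^+ d) in score_ge agm agm_eq; set P := tail_sqprod d q in P0 score_ge agm agm_eq.
have a_eq : a = 1 / 3.
  have : 3 / 4 * ((1 + a) / 2) ^+ 2 <= a.
    rewrite -(ler_pM2r P0); apply: le_trans _ score_ge; rewrite -[leLHS]mulrA.
    by apply: ler_wpM2l; [lra | exact: agm].
  by have := sqr_ge0 (1 - 3 * a); nra.
have : ((1 + a) / 2) ^+ 2 * P == G.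
  by rewrite eq_le agm /=; rewrite a_eq in score_ge *; lra.
(* Equality in AM-GM: each [x_i] equals the first term [(1 + a) / 2 = 2/3]. *)
rewrite agm_eq => /forallP/(_ (Ordinal (ltnW d2)))/forallP /= all_eq.
split=> // i /andP[i3 id].
have i1 : (i.-1 < d)%N by case: i i3 id.
move/eqP: (all_eq (Ordinal i1)); rewrite /= prednK ?(leq_trans _ i3) //.
by rewrite [agm_terms q i]agm_terms_tail // /agm_terms /= -/a a_eq => <-; lra.
Qed.

Lemma extremal_score d q : (2 <= d)%N -> extremal d q -> score d q = 3 / 4.
Proof.
move=> d2 ext; have [_ q2 xi] := ext.
have d0 : d%:R != 0 :> R by rewrite pnatr_eq0 -lt0n ltnW.
have prodE : tail_sqprod d q = (2 / 3) ^+ (d - 2).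
  rewrite /tail_sqprod (eq_big_nat _ _ (F2 := fun=> 2 / 3)) => [|i /andP[i3 id]].
    by rewrite prodr_const_nat.
  by rewrite xi // i3 -ltnS.
have powE : (2 / 3 : R) ^+ d = (2 / 3) ^+ (d - 2) * (2 / 3) ^+ 2 by rewrite -exprD subnK.
rewrite /score q2 prodE extremal_Dk1_sq // [d%:R * _]mulrC mulfK // powE.
by field; apply/expf_neq0/lt0r_neq0; lra.
Qed.

Lemma extremal_feasible d q : (2 <= d)%N -> extremal d q ->
  (forall i, (1 <= i <= d)%N -> 0 < q i) -> feasible d q.
Proof.
move=> d2 ext qpos; have [q1 _ _] := ext; split=> //; split=> // j /andP[j2 jd].
case: (ltngtP j 2) j2 => [//|j3 _|-> _]; last by rewrite extremal_Dk2.
by apply/ltW/extremal_Dk_sq_lt; rewrite ?j3.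
Qed.

Definition pstar (i : nat) : R :=
  if i == 1%N then 1 else if i == 2%N then Num.sqrt (1 / 3) else Num.sqrt (2 / 3) / i.-1%:R.

Lemma pstar_extremal d : extremal d pstar.
Proof.
split=> [//||i /andP[i3 _]]; first by rewrite /pstar -[(2 == 1)%N]/false eqxx sqr_sqrtr ?divr_ge0.
rewrite /pstar; have [-> ->] : (i == 1%N) = false /\ (i == 2%N) = false by case: i i3 => [|[|[|]]].
have i0 : i.-1%:R != 0 :> R by rewrite pnatr_eq0 -lt0n; case: i i3 => [|[|]].
by rewrite mulrC divfK // sqr_sqrtr ?divr_ge0.
Qed.

Lemma pstar_gt0 i : (1 <= i)%N -> 0 < pstar i.
Proof.
move=> i1; rewrite /pstar; case: eqP => // i_ne1; case: eqP => _.
  by rewrite sqrtr_gt0 divr_gt0.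
by rewrite divr_gt0 ?sqrtr_gt0 ?divr_gt0 // ltr0n; case: i i1 i_ne1 => [|[|]].
Qed.

Lemma pstar_feasible d : (2 <= d)%N -> feasible d pstar.
Proof.
move=> d2; apply: extremal_feasible (pstar_extremal d) _ => // i /andP[i1 _].
exact: pstar_gt0.
Qed.

Lemma maximizer_extremal d p : (2 <= d)%N -> is_maximizer d p -> extremal d p.
Proof.
move=> d2 [hf hmax]; have [_ [p1 _]] := hf; have [pstar1 _ _] := pstar_extremal d.
have obj_ge0 : 0 <= objective d pstar.
  rewrite divr_ge0 ?exprn_ge0 ?sqrtr_ge0 // big_nat_cond prodr_ge0 // => i.
  by case/andP=> /andP[i1 _] _; exact/ltW/pstar_gt0.
apply: score_ge_extremal => //.
rewrite -(extremal_score d2 (pstar_extremal d)).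
rewrite -(objective_sq_scaled d2 p1) -(objective_sq_scaled d2 pstar1).
apply: ler_wpM2r; first by rewrite mulr_ge0 ?sqr_ge0 ?exprn_ge0.
by rewrite !expr2; apply: ler_pM => //; apply: hmax; apply: pstar_feasible.
Qed.

End Maximizer.

Theorem corollary1 (R : realType) (d : nat) (p : nat -> R) :
  (2 <= d)%N -> is_maximizer d p ->
  exists k : nat,
    [/\ (2 <= k <= d)%N,
        Dk d k p = Dk d 1 p /\ Dk d 1 p = Dmax d p,
        (forall k' : nat, (2 <= k' <= d)%N ->
            Dk d k' p = Dk d 1 p -> Dk d 1 p = Dmax d p -> k' = k) &
        (forall j : nat, (2 <= j <= d)%N ->
           p j = (if (j < k)%N then
                    Num.sqrt 2 * Dk d k p / (j.-1%:R * Num.sqrt (d%:R * k%:R))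
                    * Num.sqrt ((2 * k%:R - 1) / (k%:R - 1))
                  else if j == k then
                    Dk d k p / Num.sqrt (d%:R * k%:R)
                  else
                    Dk d k p / (j.-1%:R * Num.sqrt d%:R)))].
Proof.
move=> d2 hmax; have ext := maximizer_extremal d2 hmax; have [[ppos _] _] := hmax.
exists 2%N; split=> //.
- by rewrite extremal_Dk2 // extremal_Dmax.
- move=> k /andP[k2 kd] Dk_eq _; apply/eqP; rewrite eqn_leq k2 andbT leqNgt.
  apply/negP => k3; have k_ge3 : (3 <= k <= d)%N by rewrite k3 kd.
  by have := extremal_Dk_sq_lt d2 ext k_ge3; rewrite Dk_eq ltxx.
- move=> j /andP[j2 jd]; rewrite ltnNge j2 /=.
  have pj_pos : 0 < p j by apply: ppos; rewrite jd (ltnW j2).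
  case: eqP => [j_eq2 | /eqP j_ne2]; first by subst j; exact: (extremal_q2 d2 ext pj_pos).
  have j3 : (3 <= j <= d)%N by rewrite jd ltn_neqAle eq_sym j_ne2 j2.
  exact: (extremal_qj d2 ext j3 pj_pos).
Qed.
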